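(* Let $\mathcal{H}$ be a real or complex Hilbert space and let $S:\mathcal{H}\to\mathcal{H}$ be a (not necessarily densely defined) linear operator. Let $M_{S,-S}$ be the operator on $\mathcal{H}\times\mathcal{H}$ with domain $\operatorname{dom} S\times\operatorname{dom} S$ given by $M_{S,-S}(h,k)=(Sk,Sh)$. The following are equivalent: (i) $S$ is densely defined and skew-adjoint, i.e. $S^*=-S$; (ii) every non-zero real number $t$ is in the resolvent set of $M_{S,-S}$ and $\|R_{S,-S}(t)\|\le 1/|t|$ for all real $t\neq 0$.
   Context: A scalar $\lambda$ is in the resolvent set of $M_{S,-S}$ if $M_{S,-S}-\lambda I$ is injective with everywhere defined bounded inverse on $\mathcal{H}\times\mathcal{H}$; then $R_{S,-S}(\lambda):=(M_{S,-S}-\lambda I)^{-1}$. The norm is the operator norm for the product Hilbert space $\mathcal{H}\times\mathcal{H}$. *)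

From mathcomp Require Import all_boot all_order all_algebra.
From mathcomp Require Import all_classical all_reals all_analysis.
From mathcomp.real_closed Require Export complex.

Set Implicit Arguments.
Unset Strict Implicit.
Unset Printing Implicit Defensive.

Import Order.TTheory GRing.Theory Num.Theory.
Local Open Scope classical_set_scope.
Local Open Scope ring_scope.

Section HilbertDefs.
Variables (K : numFieldType) (V : normedModType K).

(* Together with completeness of [V] this makes [V] a Hilbert space. *)
Definition is_inner_product (conj : K -> K) (ip : V -> V -> K) : Prop :=
  (forall (a : K) (x x' y : V), ip (a *: x + x') y = a * ip x y + ip x' y) /\
  (forall x y : V, ip y x = conj (ip x y)) /\
  (forall x : V, `|x| ^+ 2 = ip x x).

Definition is_linear_op (D : set V) (S : V -> V) : Prop :=
  D 0 /\
  (forall (a : K) (x y : V), D x -> D y ->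
     D (a *: x + y) /\ S (a *: x + y) = a *: S x + S y).

Definition densely_defined (D : set V) : Prop := closure D = setT.

(* (y, z) lies in the graph of the adjoint S^* : <S x, y> = <x, z> on dom S. *)
Definition adjoint_graph (ip : V -> V -> K) (D : set V) (S : V -> V)
  (y z : V) : Prop :=
  forall x, D x -> ip (S x) y = ip x z.

Definition skew_adjoint (ip : V -> V -> K) (D : set V) (S : V -> V) : Prop :=
  densely_defined D /\
  (forall y z, adjoint_graph ip D S y z <-> (D y /\ z = - S y)).

Definition Mdom (D : set V) (u : V * V) : Prop := D u.1 /\ D u.2.
Definition Mop (S : V -> V) (u : V * V) : V * V := (S u.2, S u.1).

Definition Mshift (S : V -> V) (lambda : K) (u : V * V) : V * V :=
  ((Mop S u).1 - lambda *: u.1, (Mop S u).2 - lambda *: u.2).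

Definition pnorm2 (u : V * V) : K := `|u.1| ^+ 2 + `|u.2| ^+ 2.

Definition is_resolvent (D : set V) (S : V -> V) (lambda : K)
  (Rl : V * V -> V * V) : Prop :=
  (forall u, Mdom D (Rl u) /\ Mshift S lambda (Rl u) = u) /\
  (forall w, Mdom D w -> Rl (Mshift S lambda w) = w) /\
  (exists C : K, forall u, pnorm2 (Rl u) <= C * pnorm2 u).

Definition in_resolvent_set (D : set V) (S : V -> V) (lambda : K) : Prop :=
  exists Rl, is_resolvent D S lambda Rl.

(* ||Rl|| <= 1/|t| for the operator norm of H x H (stated in squared form). *)
Definition resolvent_bound (t : K) (Rl : V * V -> V * V) : Prop :=
  forall u, `|t| ^+ 2 * pnorm2 (Rl u) <= pnorm2 u.

Definition real_resolvent_condition (D : set V) (S : V -> V) : Prop :=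
  forall t : K, t \is Num.real -> t != 0 ->
    in_resolvent_set D S t /\
    (forall Rl, is_resolvent D S t Rl -> resolvent_bound t Rl).

End HilbertDefs.

From mathcomp Require Import all_boot all_order all_algebra.
From mathcomp Require Import all_classical all_reals all_analysis.
From mathcomp.real_closed Require Import complex.
From mathcomp Require Import ring lra.
Set Implicit Arguments.
Unset Strict Implicit.
Unset Printing Implicit Defensive.

Import Order.TTheory GRing.Theory Num.Theory.
Local Open Scope classical_set_scope.
Local Open Scope ring_scope.

(* Work with the real inner product Re <x, y>.  For real t,
     |(M - t)(h, k)|^2 = |S k|^2 + |S h|^2 + t^2 |(h, k)|^2
                         - 2 t (Re <S k, h> + Re <S h, k>),
   so the bounds |R(t)| <= 1/|t| for all real t <> 0 amount to skewness
   Re <S x, y> + Re <x, S y> = 0 on dom S, while M - t is onto iff S - t and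
   S + t are.  If S^* = -S, then S - s (s real, s <> 0) is closed and bounded
   below, and a vector w orthogonal to its range satisfies S^* w = s w = -S w,
   hence vanishes; by the projection theorem S - s is onto.  Conversely, if S
   is skew and S - 1, S + 1 are onto, a vector orthogonal to dom S vanishes
   (write it as (S - 1) c and pair with c), and S^* is contained in -S. *)

Section BlockOperator.
Variables (K : numFieldType) (V : normedModType K) (D : set V) (S : V -> V).
Hypothesis S_linear : is_linear_op D S.

Lemma linop0 : D 0 /\ S 0 = 0.
Proof.
have [D0 SL] := S_linear; split => //.
have [_] := SL 1 _ _ D0 D0; rewrite !scale1r addr0 => h.
by apply: (addrI (S 0)); rewrite -h addr0.
Qed.

Lemma linopZ a x : D x -> D (a *: x) /\ S (a *: x) = a *: S x.
Proof.
have [D0 S0] := linop0.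
by move=> Dx; have := S_linear.2 a _ _ Dx D0; rewrite !addr0 S0 addr0.
Qed.

Lemma linopD x y : D x -> D y -> D (x + y) /\ S (x + y) = S x + S y.
Proof. by move=> Dx Dy; have := S_linear.2 1 _ _ Dx Dy; rewrite !scale1r. Qed.

Lemma linopB x y : D x -> D y -> D (x - y) /\ S (x - y) = S x - S y.
Proof.
move=> Dx Dy; have := S_linear.2 (-1) _ _ Dy Dx.
by rewrite !scaleN1r addrC [- S y + _]addrC.
Qed.

Lemma linop_shiftB t x y : D x -> D y ->
  S (x - y) - t *: (x - y) = (S x - t *: x) - (S y - t *: y).
Proof.
by move=> Dx Dy; rewrite (linopB Dx Dy).2 scalerBr opprD addrACA -opprD.
Qed.

Definition shift_onto (t : K) := forall f, exists2 a, D a & S a - t *: a = f.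

Definition block_shift_onto (t : K) :=
  forall u, exists2 w, Mdom D w & Mshift S t w = u.

Definition block_lower_bound (t : K) :=
  forall w, Mdom D w -> `|t| ^+ 2 * pnorm2 w <= pnorm2 (Mshift S t w).

Lemma half_double (x : V) : 2^-1 *: (x + x) = x.
Proof. by rewrite -mulr2n -scaler_nat scalerA mulVf ?scale1r ?pnatr_eq0. Qed.

(* If (S - t) a = f + g and (S + t) b = f - g, then ((a - b)/2, (a + b)/2)
   solves (M - t) w = (f, g). *)
Lemma block_shift_onto_of_shift t :
  shift_onto t -> shift_onto (- t) -> block_shift_onto t.
Proof.
move=> onto_t onto_Nt [f g].
have [a Da Ea] := onto_t (f + g); have [b Db Eb] := onto_Nt (f - g).
rewrite scaleNr opprK in Eb.
have [Dab Sab] := linopB Da Db; have [Dba Sba] := linopD Da Db.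
have [Dh Sh] := linopZ 2^-1 Dab; have [Dk Sk] := linopZ 2^-1 Dba.
exists (2^-1 *: (a - b), 2^-1 *: (a + b)); first by split.
rewrite /Mshift /= Sh Sk Sab Sba !scalerA (mulrC t) -!scalerA -!scalerBr.
congr (_, _); rewrite -[RHS]half_double; congr (_ *: _).
  rewrite scalerBr opprB [t *: b - _]addrC addrACA Ea Eb.
  by rewrite addrACA subrr addr0.
rewrite scalerDr opprD addrACA -opprD Ea Eb.
by rewrite opprB addrC addrA subrK.
Qed.

Lemma shift_onto_of_block t : block_shift_onto t -> shift_onto t.
Proof.
move=> onto f; have [[h k] [/= Dh Dk] [Ek Eh]] := onto (f, f).
have [Dhk Shk] := linopD Dh Dk; have [Dc Sc] := linopZ 2^-1 Dhk.
exists (2^-1 *: (h + k)) => //.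
rewrite Sc Shk scalerA mulrC -scalerA -scalerBr -[RHS]half_double.
congr (_ *: _); rewrite scalerDr opprD [- _ - _]addrC addrACA.
by rewrite Eh Ek.
Qed.

Lemma Mshift_subr t w w' : Mdom D w -> Mdom D w' ->
  Mdom D (w - w') /\ Mshift S t (w - w') = Mshift S t w - Mshift S t w'.
Proof.
case: w w' => [h k] [h' k'] [/= Dh Dk] [/= Dh' Dk'].
have [Dhh Shh] := linopB Dh Dh'; have [Dkk Skk] := linopB Dk Dk'.
split; first by split.
by rewrite /Mshift /= Shh Skk !scalerBr; congr (_, _); rewrite opprD addrACA -opprD.
Qed.

Lemma pnorm2_ge0 (u : V * V) : 0 <= pnorm2 u.
Proof. by rewrite addr_ge0 // exprn_ge0. Qed.

Lemma pnorm2_eq0 (u : V * V) : pnorm2 u = 0 -> u = 0.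
Proof.
case: u => h k /eqP; rewrite paddr_eq0 ?exprn_ge0 // !sqrf_eq0 !normr_eq0 /=.
by case/andP => /eqP -> /eqP ->.
Qed.

Lemma block_lower_bound_of_resolvent t Rl :
  is_resolvent D S t Rl -> resolvent_bound t Rl -> block_lower_bound t.
Proof. by move=> [_ [RlK _]] bound w Dw; rewrite -{1}(RlK w Dw). Qed.

Lemma Mshift_inj t w w' : t != 0 -> block_lower_bound t ->
  Mdom D w -> Mdom D w' -> Mshift S t w = Mshift S t w' -> w = w'.
Proof.
move=> t0 bound Dw Dw' E; have [Ddiff Ediff] := Mshift_subr t Dw Dw'.
have := bound _ Ddiff; rewrite Ediff E subrr [pnorm2 0]/pnorm2 normr0 expr0n addr0 /=.
rewrite pmulr_rle0 ?exprn_gt0 ?normr_gt0 // => le0.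
apply/eqP; rewrite -subr_eq0; apply/eqP/pnorm2_eq0/eqP.
by rewrite eq_le le0 pnorm2_ge0.
Qed.

Lemma resolvent_of_block_bound t : t != 0 ->
  block_shift_onto t -> block_lower_bound t ->
  in_resolvent_set D S t /\ forall Rl, is_resolvent D S t Rl -> resolvent_bound t Rl.
Proof.
move=> t0 onto bound; split; last first.
  by move=> Rl [RlP _] u; have [Dw E] := RlP u; rewrite -{2}E; exact: bound.
pose Rl u := s2val (cid2 (onto u)).
have DRl u : Mdom D (Rl u) := s2valP (cid2 (onto u)).
have RlK u : Mshift S t (Rl u) = u := s2valP' (cid2 (onto u)).
exists Rl; split=> //; split=> [w Dw | ]; first exact: Mshift_inj t0 bound _ Dw (RlK _).
exists (`|t| ^- 2) => u; rewrite mulrC ler_pdivlMr ?exprn_gt0 ?normr_gt0 //.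
by rewrite mulrC -{2}(RlK u); exact: bound.
Qed.

Lemma block_of_resolvent_condition t : real_resolvent_condition D S ->
  t \is Num.real -> t != 0 -> block_shift_onto t /\ block_lower_bound t.
Proof.
move=> RC t_real t0; have [[Rl RlR] bound] := RC t t_real t0.
split; last exact: block_lower_bound_of_resolvent RlR (bound Rl RlR).
by move=> u; exists (Rl u); case: (RlR.1 u).
Qed.

End BlockOperator.

Lemma exists_invS_lt (R : realType) (e : R) : 0 < e -> exists N : nat, N.+1%:R^-1 < e.
Proof.
move=> e0; exists (Num.truncn e^-1); have := truncnS_gt e^-1.
by rewrite -[e in _ < e]invrK ltf_pV2 // ?posrE ?invr_gt0.
Qed.

Lemma lef_invS (R : realType) (m n : nat) : (m <= n)%N -> n.+1%:R^-1 <= m.+1%:R^-1 :> R.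
Proof. by move=> mn; rewrite lef_pV2 ?posrE // ler_nat ltnS. Qed.

Lemma bounded_linear_eq0 (R : realFieldType) (a b : R) :
  (forall t, t != 0 -> t * b <= a) -> b = 0.
Proof.
move=> bound; apply/eqP; apply: contraT => b0.
have t0 : (`|a| + 1) / b != 0 by rewrite mulf_neq0 ?invr_eq0 // gt_eqF // ltr_wpDl.
by have := bound _ t0; rewrite mulfVK //; have := ler_norm a; lra.
Qed.

Lemma dominated_linear_eq0 (R : realFieldType) (a b : R) :
  0 <= a -> (forall t, t * b <= t ^+ 2 * a) -> b = 0.
Proof.
move=> a0 bound; have := bound (b / (a + 1)); set t := b / (a + 1).
have -> : b = t * (a + 1) by rewrite mulfVK // gt_eqF // ltr_wpDl.
move=> le; have -> : t = 0 by nra.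
by rewrite mul0r.
Qed.

(* K is R or C, seen as an R-algebra through emb, and re is the real part.
   rdot = Re <.,.> makes V a real Hilbert space with the same norm; since
   only real spectral parameters occur, the whole argument takes place there. *)
Section RealPart.
Variables (R : realType) (K : numFieldType).
Variables (emb : {rmorphism R -> K}) (re : {additive K -> R}) (conjugate : K -> K).
Hypothesis ler_emb : forall r s, (emb r <= emb s) = (r <= s).
Hypothesis reK : forall a, a \is Num.real -> emb (re a) = a.
Hypothesis reMl : forall r a, re (emb r * a) = r * re a.
Hypothesis re_conj : forall a, re (conjugate a) = re a.
Hypothesis re_nondegenerate : forall c, (forall a, re (a * c) = 0) -> c = 0.

Lemma emb_real r : emb r \is Num.real.
Proof. by rewrite realE -(rmorph0 emb) !ler_emb -realE num_real. Qed.

Lemma embK r : re (emb r) = r.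
Proof. by apply: (fmorph_inj emb); rewrite reK ?emb_real. Qed.

Lemma ltr_emb r s : (emb r < emb s) = (r < s).
Proof. by rewrite !lt_def ler_emb (inj_eq (fmorph_inj emb)). Qed.

Lemma normr_emb r : `|emb r| = emb `|r|.
Proof.
have [r0|r0] := leP 0 r; first by rewrite !ger0_norm // -(rmorph0 emb) ler_emb.
by rewrite !ltr0_norm ?rmorphN // -(rmorph0 emb) ltr_emb.
Qed.

Lemma emb_pos (e : K) : 0 < e -> exists2 r, 0 < r & emb r = e.
Proof.
move=> e0; have er : e \is Num.real by rewrite gtr0_real.
by exists (re e); rewrite ?reK // -ltr_emb rmorph0 reK.
Qed.

Variables (V : completeNormedModType K) (ip : V -> V -> K).
Hypothesis ip_inner : is_inner_product conjugate ip.

Definition rnorm (x : V) : R := re `|x|.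
Definition rdot (x y : V) : R := re (ip x y).

Lemma normrE x : `|x| = emb (rnorm x).
Proof. by rewrite reK ?normr_real. Qed.

Lemma rnorm_ge0 x : 0 <= rnorm x.
Proof. by rewrite -ler_emb rmorph0 -normrE. Qed.

Lemma rnorm_eq0 x : rnorm x = 0 -> x = 0.
Proof. by move=> x0; apply/normr0_eq0; rewrite normrE x0 rmorph0. Qed.

Lemma rnorm0 : rnorm 0 = 0.
Proof. by rewrite /rnorm normr0 raddf0. Qed.

Lemma rnormD x y : rnorm (x + y) <= rnorm x + rnorm y.
Proof. by rewrite -ler_emb rmorphD -!normrE ler_normD. Qed.

Lemma rnormN x : rnorm (- x) = rnorm x.
Proof. by rewrite /rnorm normrN. Qed.

Lemma rnormZ r x : rnorm (emb r *: x) = `|r| * rnorm x.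
Proof. by rewrite /rnorm normrZ normr_emb reMl. Qed.

Lemma ipDl x y z : ip (x + y) z = ip x z + ip y z.
Proof. by have := ip_inner.1 1 x y z; rewrite scale1r mul1r. Qed.

Lemma ip0l z : ip 0 z = 0.
Proof. by apply: (addrI (ip 0 z)); rewrite -ipDl !addr0. Qed.

Lemma ipZl a x z : ip (a *: x) z = a * ip x z.
Proof. by rewrite -[a *: x]addr0 ip_inner.1 ip0l addr0. Qed.

Lemma rdotC x y : rdot x y = rdot y x.
Proof. by rewrite /rdot ip_inner.2.1 re_conj. Qed.

Lemma rdotDl x y z : rdot (x + y) z = rdot x z + rdot y z.
Proof. by rewrite /rdot ipDl raddfD. Qed.

Lemma rdotZl r x z : rdot (emb r *: x) z = r * rdot x z.
Proof. by rewrite /rdot ipZl reMl. Qed.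

Lemma rdotNl x z : rdot (- x) z = - rdot x z.
Proof. by rewrite -scaleN1r -(rmorphN1 emb) rdotZl mulN1r. Qed.

Lemma rdotBl x y z : rdot (x - y) z = rdot x z - rdot y z.
Proof. by rewrite rdotDl rdotNl. Qed.

Lemma rdotDr x y z : rdot z (x + y) = rdot z x + rdot z y.
Proof. by rewrite rdotC rdotDl !(rdotC z). Qed.

Lemma rdotZr r x z : rdot z (emb r *: x) = r * rdot z x.
Proof. by rewrite rdotC rdotZl rdotC. Qed.

Lemma rdotNr x z : rdot z (- x) = - rdot z x.
Proof. by rewrite rdotC rdotNl rdotC. Qed.

Lemma rdotBr x y z : rdot z (x - y) = rdot z x - rdot z y.
Proof. by rewrite rdotDr rdotNr. Qed.

Lemma rdot0r z : rdot z 0 = 0.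
Proof. by rewrite rdotC /rdot ip0l raddf0. Qed.

Lemma rdotxx x : rdot x x = rnorm x ^+ 2.
Proof. by rewrite /rdot -ip_inner.2.2 normrE -rmorphXn embK. Qed.

Ltac rdot_expand :=
  rewrite ?(rdotDl, rdotDr, rdotBl, rdotBr, rdotNl, rdotNr, rdotZl, rdotZr).

Lemma rdot_CauchySchwarz x y : `|rdot x y| <= rnorm x * rnorm y.
Proof.
have [y0|y_neq0] := eqVneq (rnorm y) 0.
  by rewrite (rnorm_eq0 y0) rdot0r normr0 rnorm0 mulr0.
have y_gt0 : 0 < rnorm y by rewrite lt_def y_neq0 rnorm_ge0.
pose v := emb (rnorm y ^+ 2) *: x - emb (rdot x y) *: y.
have : 0 <= rdot v v by rewrite rdotxx sqr_ge0.
rewrite /v; rdot_expand; rewrite (rdotC y x) !rdotxx => h.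
rewrite -ler_sqr ?nnegrE ?mulr_ge0 ?rnorm_ge0 // real_normK ?num_real //.
have : 0 <= rnorm y ^+ 2 * ((rnorm x * rnorm y) ^+ 2 - rdot x y ^+ 2) by nra.
by rewrite pmulr_rge0 ?subr_ge0 // exprn_gt0.
Qed.

Lemma rnorm_subZ_sqr w z l :
  rnorm (w - emb l *: z) ^+ 2 = rnorm w ^+ 2 - 2 * l * rdot w z + l ^+ 2 * rnorm z ^+ 2.
Proof. by rewrite -!rdotxx; rdot_expand; rewrite (rdotC z w); ring. Qed.

Definition rcvg (u : nat -> V) (p : V) :=
  forall e, 0 < e -> exists N, forall n, (N <= n)%N -> rnorm (p - u n) < e.

Definition rcauchy (u : nat -> V) :=
  forall e, 0 < e -> exists N, forall n m, (N <= n)%N -> (N <= m)%N -> rnorm (u n - u m) < e.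

Lemma rcauchy_rcvg u : rcauchy u -> exists p, rcvg u p.
Proof.
move=> u_cauchy.
have /cauchy_cvg u_cvg : cauchy (u @ \oo).
  apply: cauchy_exP => e /emb_pos [r r0 <-].
  have [N uN] := u_cauchy r r0; exists (u N), N => // n /= Nn.
  by rewrite -ball_normE /ball_ /= normrE ltr_emb; apply: uN.
exists (lim (u @ \oo)) => e e0.
have /(@cvgr_dist_lt _ _ _ _ _ u _ u_cvg) [N _ uN] : 0 < emb e by rewrite -(rmorph0 emb) ltr_emb.
by exists N => n Nn; rewrite -ltr_emb -normrE; apply: uN.
Qed.

Lemma rcvg_cauchy u p : rcvg u p -> rcauchy u.
Proof.
move=> u_p e e0; have [N uN] := u_p (e / 2) (divr_gt0 e0 (ltr0Sn _ 1)).
exists N => n m Nn Nm; have := uN n Nn; have := uN m Nm.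
have -> : u n - u m = (p - u m) - (p - u n) by rewrite opprB [RHS]addrC addrA subrK.
by have := rnormD (p - u m) (- (p - u n)); rewrite rnormN; lra.
Qed.

Lemma rcvg_closure (E : set V) u p : (forall n, E (u n)) -> rcvg u p -> closure E p.
Proof.
move=> Eu u_p B /nbhs_ballP [_ /emb_pos [e e0 <-] pB].
have [N uN] := u_p e e0; exists (u N); split => //; apply: pB.
by rewrite -ball_normE /ball_ /= normrE ltr_emb; apply: uN.
Qed.

Lemma rcvgD u v p q : rcvg u p -> rcvg v q -> rcvg (fun n => u n + v n) (p + q).
Proof.
move=> u_p v_q e e0; have e2 := divr_gt0 e0 (ltr0Sn _ 1).
have [N1 uN] := u_p _ e2; have [N2 vN] := v_q _ e2.
exists (maxn N1 N2) => n; rewrite geq_max => /andP [N1n N2n].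
rewrite opprD addrACA; have := rnormD (p - u n) (q - v n).
by have := uN n N1n; have := vN n N2n; lra.
Qed.

Lemma rcvgZ r u p : rcvg u p -> rcvg (fun n => emb r *: u n) (emb r *: p).
Proof.
move=> u_p e e0; have er : 0 < e / (`|r| + 1) by rewrite divr_gt0 // ltr_wpDl.
have [N uN] := u_p _ er; exists N => n Nn; rewrite -scalerBr rnormZ.
have := uN n Nn; rewrite ltr_pdivlMr ?ltr_wpDl //.
by have := rnorm_ge0 (p - u n); have := normr_ge0 r; nra.
Qed.

Lemma rcvgN u p : rcvg u p -> rcvg (fun n => - u n) (- p).
Proof. by move=> u_p e /u_p [N uN]; exists N => n /uN; rewrite -opprD rnormN. Qed.

Lemma rdot_rcvg u p z : rcvg u p ->
  forall e, 0 < e -> exists N, forall n, (N <= n)%N -> `|rdot p z - rdot (u n) z| < e.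
Proof.
move=> u_p e e0; have z1 : 0 < rnorm z + 1 by rewrite ltr_wpDl ?rnorm_ge0.
have [N uN] := u_p _ (divr_gt0 e0 z1); exists N => n /uN.
rewrite ltr_pdivlMr // mulrDr mulr1 -rdotBl => close.
by apply: le_lt_trans (rdot_CauchySchwarz _ _) _; have := rnorm_ge0 (p - u n); lra.
Qed.

Lemma rdot_le_lim u p z c :
  rcvg u p -> (forall n, rdot (u n) z <= c + n.+1%:R^-1) -> rdot p z <= c.
Proof.
move=> u_p le_c; apply/ler_addgt0Pr => e e0; have e2 := divr_gt0 e0 (ltr0Sn _ 1).
have [N1 N1e] := exists_invS_lt e2; have [N2 uN] := rdot_rcvg z u_p e2.
pose n := maxn N1 N2; have := uN n (leq_maxr _ _); have := le_c n.
have := ler_norm (rdot p z - rdot (u n) z); have := @lef_invS R N1 n (leq_maxl _ _).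
by move: N1e; move: (N1.+1%:R^-1) (n.+1%:R^-1) => i j; lra.
Qed.

Definition subspace (E : set V) :=
  E 0 /\ forall (a : K) x y, E x -> E y -> E (a *: x + y).

Section Minimizing.
Variables (E : set V) (f : V) (d : R) (e : nat -> V).
Hypotheses (E_subspace : subspace E) (Ee : forall n, E (e n)).
Hypothesis d_le : forall x, E x -> d <= rnorm (f - x) ^+ 2.
Hypothesis e_min : forall n, rnorm (f - e n) ^+ 2 < d + n.+1%:R^-1.

Lemma subspace_closed a x y : E x -> E y -> E (emb a *: x + y).
Proof. exact: E_subspace.2. Qed.

Lemma minimizing_rcauchy : rcauchy e.
Proof.
move=> eps eps0; have [N N_lt] := exists_invS_lt (divr_gt0 (exprn_gt0 2 eps0) (ltr0Sn _ 3)).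
exists N => n m Nn Nm.
pose mid := emb 2^-1 *: (e n + e m).
have Enm : E (e n + e m) by rewrite -[e n]scale1r; apply: E_subspace.2.
have mid_le := d_le (subspace_closed 2^-1 Enm E_subspace.1); rewrite addr0 -/mid in mid_le.
have parallelogram : rnorm (e n - e m) ^+ 2 =
    2 * rnorm (f - e n) ^+ 2 + 2 * rnorm (f - e m) ^+ 2 - 4 * rnorm (f - mid) ^+ 2.
  rewrite /mid -!rdotxx; rdot_expand.
  by rewrite (rdotC (e m) (e n)) (rdotC (e n) f) (rdotC (e m) f); field.
have := e_min n; have := e_min m; have := @lef_invS R _ _ Nn; have := @lef_invS R _ _ Nm.
move: N_lt; move: (N.+1%:R^-1) (n.+1%:R^-1) (m.+1%:R^-1) => i j k.
have := rnorm_ge0 (e n - e m); nra.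
Qed.

Lemma minimizing_orthogonal p : rcvg e p -> forall z, E z -> rdot (f - p) z = 0.
Proof.
move=> e_p z Ez.
suff /(dominated_linear_eq0 (sqr_ge0 _)) :
    forall t, t * (2 * rdot (f - p) z) <= t ^+ 2 * rnorm z ^+ 2 by lra.
move=> t; have : rdot p (emb (- 2 * t) *: z) <= t ^+ 2 * rnorm z ^+ 2 - 2 * t * rdot f z.
  apply: (rdot_le_lim e_p) => n; have := d_le (subspace_closed t Ez (Ee n)).
  rewrite opprD addrA addrAC rnorm_subZ_sqr rdotBl rdotZr mulrBr.
  by have := e_min n; move: (n.+1%:R^-1) => j; nra.
by rewrite rdotZr rdotBl; nra.
Qed.
End Minimizing.

Lemma projection_theorem (E : set V) f : subspace E ->
  exists2 e : nat -> V, (forall n, E (e n)) &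
    exists2 p, rcvg e p & forall z, E z -> rdot (f - p) z = 0.
Proof.
move=> E_subspace; pose A := [set rnorm (f - x) ^+ 2 | x in E].
have A_inf : has_inf A.
  by split; [exists (rnorm (f - 0) ^+ 2), 0; first exact: E_subspace.1 |
             exists 0 => _ [x _ <-]; exact: sqr_ge0].
have d_le x : E x -> inf A <= rnorm (f - x) ^+ 2.
  by move=> Ex; apply: (ge_inf A_inf.2); exists x.
have near_inf n : exists2 x, E x & rnorm (f - x) ^+ 2 < inf A + n.+1%:R^-1.
  have n_gt0 : 0 < n.+1%:R^-1 :> R by rewrite invr_gt0.
  by have [_ [x Ex <-]] := inf_adherent n_gt0 A_inf; exists x.
pose e n := s2val (cid2 (near_inf n)).
have Ee n : E (e n) := s2valP (cid2 (near_inf n)).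
have e_min n : rnorm (f - e n) ^+ 2 < inf A + n.+1%:R^-1 := s2valP' (cid2 (near_inf n)).
have [p e_p] := rcauchy_rcvg (minimizing_rcauchy E_subspace Ee d_le e_min).
by exists e => //; exists p => // z; exact: (minimizing_orthogonal E_subspace Ee d_le e_min e_p).
Qed.

Variables (D : set V) (S : V -> V).
Hypothesis S_linear : is_linear_op D S.

Lemma dom_subspace : subspace D.
Proof. by have [D0 SL] := S_linear; split=> // a x y Dx Dy; have [] := SL a x y Dx Dy. Qed.

Lemma adjoint_graphP y z :
  adjoint_graph ip D S y z <-> forall x, D x -> rdot (S x) y = rdot x z.
Proof.
split=> [adj x Dx | rdotE x Dx]; first by rewrite /rdot adj.
apply/eqP; rewrite -subr_eq0; apply/eqP; apply: re_nondegenerate => a.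
have [Dax Sax] := linopZ S_linear a Dx.
by rewrite mulrBr raddfB -!ipZl -Sax; have := rdotE _ Dax; rewrite /rdot => ->; exact: subrr.
Qed.

Lemma adjoint_graphB y z y' z' : adjoint_graph ip D S y z -> adjoint_graph ip D S y' z' ->
  adjoint_graph ip D S (y - y') (z - z').
Proof.
move=> /adjoint_graphP adj /adjoint_graphP adj'; apply/adjoint_graphP => x Dx.
by rewrite !rdotBr adj ?adj'.
Qed.

Lemma adjoint_graph_shiftP s w : adjoint_graph ip D S w (emb s *: w) <->
  forall x, D x -> rdot w (S x - emb s *: x) = 0.
Proof.
rewrite adjoint_graphP; split=> orth x /orth;
  by rewrite rdotBr !rdotZr (rdotC w (S x)) (rdotC w x); lra.
Qed.

Lemma shift_orthogonal_eq0 s w : shift_onto D S (emb s) ->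
  (forall x, D x -> rdot w (S x - emb s *: x) = 0) -> w = 0.
Proof.
move=> onto orth; have [x Dx Ex] := onto w; apply: rnorm_eq0.
by have /eqP := orth x Dx; rewrite Ex rdotxx sqrf_eq0 => /eqP.
Qed.

Lemma adjoint_graph_lim y z y0 z0 : (forall n, adjoint_graph ip D S (y n) (z n)) ->
  rcvg y y0 -> rcvg z z0 -> adjoint_graph ip D S y0 z0.
Proof.
move=> adj y_y0 z_z0; apply/adjoint_graphP => x Dx; rewrite (rdotC (S x)) (rdotC x).
apply/eqP; rewrite -subr_eq0 -normr_le0; apply/ler_addgt0Pr => e e0; rewrite add0r.
have e2 := divr_gt0 e0 (ltr0Sn _ 1).
have [N1 yN] := rdot_rcvg (S x) y_y0 e2; have [N2 zN] := rdot_rcvg x z_z0 e2.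
pose n := maxn N1 N2; have := yN n (leq_maxl _ _); have := zN n (leq_maxr _ _).
have /adjoint_graphP/(_ x Dx) := adj n; rewrite (rdotC (S x)) (rdotC x) => yz.
have := ler_normB (rdot y0 (S x) - rdot (y n) (S x)) (rdot z0 x - rdot (z n) x).
by rewrite yz opprB addrA subrK; lra.
Qed.

Definition rskew := forall x y, D x -> D y -> rdot (S x) y + rdot x (S y) = 0.

Lemma rskew_diag x : rskew -> D x -> rdot x (S x) = 0.
Proof. by move=> skew Dx; have := skew x x Dx Dx; rewrite (rdotC (S x)); lra. Qed.

Lemma adjoint_graph_opp y : rskew -> D y -> adjoint_graph ip D S y (- S y).
Proof.
by move=> skew Dy; apply/adjoint_graphP => x Dx; rewrite rdotNr; have := skew x y Dx Dy; lra.
Qed.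

Lemma pnorm2E u : pnorm2 u = emb (rnorm u.1 ^+ 2 + rnorm u.2 ^+ 2).
Proof. by rewrite /pnorm2 !normrE rmorphD !rmorphXn. Qed.

Lemma normr_emb_sqr t : `|emb t| ^+ 2 = emb (t ^+ 2).
Proof. by rewrite normr_emb -rmorphXn real_normK ?num_real. Qed.

Lemma pnorm2_Mshift t h k : pnorm2 (Mshift S (emb t) (h, k)) =
  emb (rnorm (S k) ^+ 2 + rnorm (S h) ^+ 2 + t ^+ 2 * (rnorm h ^+ 2 + rnorm k ^+ 2)
       - 2 * t * (rdot (S k) h + rdot (S h) k)).
Proof. by rewrite pnorm2E /= !rnorm_subZ_sqr; apply: f_equal; ring. Qed.

Lemma block_lower_bound_of_rskew t : rskew -> block_lower_bound D S (emb t).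
Proof.
move=> skew [h k] [/= Dh Dk].
rewrite normr_emb_sqr pnorm2_Mshift pnorm2E -rmorphM ler_emb /=.
rewrite (rdotC (S k)) [rdot h (S k) + _]addrC skew // mulr0 subr0.
by have := sqr_ge0 (rnorm (S k)); have := sqr_ge0 (rnorm (S h)); lra.
Qed.

Lemma rskew_of_block_lower_bound :
  (forall t, t != 0 -> block_lower_bound D S (emb t)) -> rskew.
Proof.
move=> bound x y Dx Dy.
suff /bounded_linear_eq0 : forall t, t != 0 ->
    t * (2 * (rdot (S x) y + rdot x (S y))) <= rnorm (S x) ^+ 2 + rnorm (S y) ^+ 2.
  by lra.
move=> t t0; have := bound t t0 (y, x) (conj Dy Dx).
by rewrite normr_emb_sqr pnorm2_Mshift pnorm2E -rmorphM ler_emb /= (rdotC (S y)); lra.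
Qed.

Definition adjoint_opp := forall y z, adjoint_graph ip D S y z <-> D y /\ z = - S y.

Lemma rskew_of_adjoint_opp : adjoint_opp -> rskew.
Proof.
move=> adj x y Dx Dy.
have /adjoint_graphP/(_ y Dy) : adjoint_graph ip D S x (- S x) by apply/adj.
by rewrite rdotNr (rdotC (S y) x) (rdotC y (S x)); lra.
Qed.

Lemma rskew_lower_bound s x : rskew -> D x -> `|s| * rnorm x <= rnorm (S x - emb s *: x).
Proof.
move=> skew Dx; rewrite -ler_sqr ?nnegrE ?mulr_ge0 ?rnorm_ge0 //.
rewrite rnorm_subZ_sqr (rdotC (S x)) rskew_diag // exprMn real_normK ?num_real //.
by have := sqr_ge0 (rnorm (S x)); lra.
Qed.

(* S = - S^* is closed and S - s is bounded below. *)
Lemma shift_range_closed s a p : adjoint_opp -> s != 0 -> (forall n, D (a n)) ->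
  rcvg (fun n => S (a n) - emb s *: a n) p -> exists2 a0, D a0 & S a0 - emb s *: a0 = p.
Proof.
move=> adj s0 Da Sa_p; have s_gt0 : 0 < `|s| by rewrite normr_gt0.
have a_cauchy : rcauchy a.
  move=> e e0; have [N SaN] := rcvg_cauchy Sa_p (mulr_gt0 e0 s_gt0).
  exists N => n m Nn Nm; have := SaN n m Nn Nm; rewrite -(linop_shiftB S_linear) //.
  have := rskew_lower_bound s (rskew_of_adjoint_opp adj) (linopB S_linear (Da n) (Da m)).1.
  by move=> lb lt; rewrite -(ltr_pM2l s_gt0); lra.
have [a0 a_a0] := rcauchy_rcvg a_cauchy.
have Sa_lim : rcvg (fun n => - S (a n)) (- (p + emb s *: a0)).
  apply: rcvgN; have := rcvgD Sa_p (rcvgZ s a_a0).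
  by rewrite (_ : (fun n => _) = fun n => S (a n)) //; apply: funext => n; exact: subrK.
have /adj [Da0 Sa0] := adjoint_graph_lim (fun n => (adj _ _).2 (conj (Da n) erefl)) a_a0 Sa_lim.
by exists a0 => //; rewrite -[S a0]opprK -Sa0 opprK addrK.
Qed.

Lemma shift_range_orthogonal_eq0 s w : adjoint_opp -> s != 0 ->
  (forall x, D x -> rdot w (S x - emb s *: x) = 0) -> w = 0.
Proof.
move=> adj s0 /adjoint_graph_shiftP /adj [Dw Sw]; apply: rnorm_eq0.
have := rskew_diag (rskew_of_adjoint_opp adj) Dw.
rewrite -[S w]opprK -Sw rdotNr rdotZr rdotxx.
by move/eqP; rewrite oppr_eq0 mulf_eq0 (negbTE s0) sqrf_eq0 => /eqP.
Qed.

Lemma shift_range_subspace t : subspace [set S a - t *: a | a in D].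
Proof.
split; first by exists 0; rewrite ?(linop0 S_linear).2 ?scaler0 ?subrr //; exact: dom_subspace.1.
move=> c _ _ [a1 Da1 <-] [a2 Da2 <-]; have [Dc Sc] := S_linear.2 c _ _ Da1 Da2.
exists (c *: a1 + a2) => //; rewrite Sc scalerDr scalerBr !scalerA (mulrC c).
by rewrite opprD addrACA.
Qed.

Lemma shift_onto_of_adjoint_opp s : adjoint_opp -> s != 0 -> shift_onto D S (emb s).
Proof.
move=> adj s0 f.
have [e Ee [p e_p orth]] := projection_theorem f (shift_range_subspace (emb s)).
pose a n := s2val (cid2 (Ee n)).
have Ea : (fun n => S (a n) - emb s *: a n) = e := funext (fun n => s2valP' (cid2 (Ee n))).
have Sa_p : rcvg (fun n => S (a n) - emb s *: a n) p by rewrite Ea.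
have [a0 Da0 Ea0] := shift_range_closed adj s0 (fun n => s2valP (cid2 (Ee n))) Sa_p.
exists a0 => //; rewrite Ea0; apply/eqP; rewrite eq_sym -subr_eq0; apply/eqP.
by apply: shift_range_orthogonal_eq0 adj s0 _ => x Dx; apply: orth; exists x.
Qed.

Lemma resolvent_condition_of_adjoint_opp : adjoint_opp -> real_resolvent_condition D S.
Proof.
move=> adj t t_real t0; rewrite -(reK t_real) in t0 *.
have re_t0 : re t != 0 by apply: contra t0 => /eqP ->; rewrite rmorph0.
apply: resolvent_of_block_bound => //; last first.
  exact: block_lower_bound_of_rskew (rskew_of_adjoint_opp adj).
by apply: (block_shift_onto_of_shift S_linear); rewrite -?rmorphN;
  apply: shift_onto_of_adjoint_opp; rewrite ?oppr_eq0.
Qed.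

Lemma dense_of_rskew : rskew -> shift_onto D S (emb 1) -> densely_defined D.
Proof.
move=> skew onto; apply/seteqP; split => // y _.
have [e De [p e_p orth]] := projection_theorem y dom_subspace.
suff -> : y = p by exact: rcvg_closure De e_p.
have [c Dc Ec] := onto (y - p); have := orth c Dc.
rewrite -Ec rmorph1 scale1r rdotBl (rdotC (S c)) rskew_diag // rdotxx sub0r.
move/eqP; rewrite oppr_eq0 sqrf_eq0 => /eqP/rnorm_eq0 c0.
by apply/eqP; rewrite -subr_eq0 -Ec c0 (linop0 S_linear).2 scaler0 subr0.
Qed.

(* If S^* y = z and (S + 1) c = y - z, then S^* (y - c) = y - c, which forces
   y = c since S - 1 is onto. *)
Lemma adjoint_opp_of_rskew :
  rskew -> shift_onto D S (emb 1) -> shift_onto D S (emb (-1)) -> adjoint_opp.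
Proof.
move=> skew onto1 ontoN1 y z; split=> [adj | [Dy ->]]; last exact: adjoint_graph_opp.
have [c Dc] := ontoN1 (y - z); rewrite rmorphN1 scaleN1r opprK => Ec.
have cz : z - - S c = emb 1 *: (y - c).
  by rewrite rmorph1 scale1r opprK -[S c](addrK c) Ec addrA [z + _]addrCA subrr addr0.
have := adjoint_graphB adj (adjoint_graph_opp skew Dc); rewrite cz.
move=> /adjoint_graph_shiftP/(shift_orthogonal_eq0 onto1)/eqP.
rewrite subr_eq0 => /eqP yc; rewrite -yc in Ec Dc; split => //.
by rewrite -[z](subKr y) -Ec opprD addrCA subrr addr0.
Qed.

Lemma skew_adjoint_iff_resolvent_condition :
  skew_adjoint ip D S <-> real_resolvent_condition D S.
Proof.
split=> [[_ adj] | RC]; first exact: resolvent_condition_of_adjoint_opp.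
have block t : t != 0 -> block_shift_onto D S (emb t) /\ block_lower_bound D S (emb t).
  by move=> t0; apply: block_of_resolvent_condition RC (emb_real t) _; rewrite fmorph_eq0.
have skew : rskew by apply: rskew_of_block_lower_bound => t /block [].
have onto t : t != 0 -> shift_onto D S (emb t).
  by move=> /block [onto _]; exact: shift_onto_of_block S_linear _ onto.
have onto1 := onto 1 (oner_neq0 _).
have ontoN1 : shift_onto D S (emb (-1)) by apply: onto; rewrite oppr_eq0 oner_eq0.
by split; [exact: dense_of_rskew | exact: adjoint_opp_of_rskew].
Qed.

End RealPart.

Lemma Re_mul_real (R : realType) (r : R) (a : R[i]) : complex.Re (r%:C%C * a) = r * complex.Re a.
Proof. by case: a => a1 a2 /=; rewrite mul0r subr0. Qed.

Lemma Re_nondegenerate (R : realType) (c : R[i]) :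
  (forall a, complex.Re (a * c) = 0) -> c = 0.
Proof.
case: c => x y c_orth; have := c_orth 1; have := c_orth (0 +i* (-1))%C.
by rewrite /= mul1r !mul0r subr0 mulN1r opprK add0r => -> ->.
Qed.

Theorem corollary4p3 :
  (* real Hilbert spaces *)
  (forall (R : realType) (H : completeNormedModType R) (ip : H -> H -> R)
     (D : set H) (S : H -> H),
     is_inner_product id ip -> is_linear_op D S ->
     (skew_adjoint ip D S <-> real_resolvent_condition D S)) /\
  (* complex Hilbert spaces *)
  (forall (R : realType) (H : completeNormedModType R[i]) (ip : H -> H -> R[i])
     (D : set H) (S : H -> H),
     is_inner_product Num.conj ip -> is_linear_op D S ->
     (skew_adjoint ip D S <-> real_resolvent_condition D S)).
Proof.
split=> R H ip D S ip_inner S_linear.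
  apply: (@skew_adjoint_iff_resolvent_condition R R idfun idfun id) => //.
  by move=> c /(_ 1); rewrite mul1r.
apply: (@skew_adjoint_iff_resolvent_condition R R[i] (real_complex R) (@complex.Re R) Num.conj)
  => //.
- exact: lecR.
- exact: RRe_real.
- exact: Re_mul_real.
- by case.
- exact: Re_nondegenerate.
Qed.
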